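(* Let $\alpha$ be a nonzero real number. A regular curve in $\mathbb H^2$ with constant curvature, not passing through $N$, is an $\alpha$-stationary curve if and only if one of the following holds: (1) it is contained in a geodesic passing through $N$ (this case occurs for every value of $\alpha$); (2) it is contained in a circle of radius $r>0$ centered at $N$ and $\alpha=-r\coth(r)$ (this case occurs for every $r>0$).
   Context: Let $\langle x,y\rangle_\epsilon=x_1y_1+x_2y_2-x_3y_3$ be the Lorentzian inner product on $\mathbb R^3$ and $|x|_\epsilon=\sqrt{|\langle x,x\rangle_\epsilon|}$. The hyperbolic plane is $\mathbb H^2=\{(x,y,z):x^2+y^2-z^2=-1,\ z>0\}$ with the induced metric. It is parametrized by $\Psi(u,v)=(\sinh u\cos v,\sinh u\sin v,\cosh u)$. Let $N=(0,0,1)$. The hyperbolic distance from $\Psi(u,v)$ to $N$ is $u$, and the circle of radius $r$ centered at $N$ is $\{\Psi(r,v):v\in\mathbb R\}$. For a regular curve $\gamma(t)=\Psi(u(t),v(t))$ with $u>0$, we have $|\gamma'|_\epsilon=\sqrt{u'^2+\sinh^2(u)v'^2}$. Its unit normal is $$\mathbf n=\frac{1}{|\gamma'|_\epsilon}\big(u'\sin v+\sinh u\cosh u\,v'\cos v,\ \sinh u\cosh u\,v'\sin v-u'\cos v,\ \sinh^2(u)v'\big).$$ Its (geodesic) curvature is $\kappa=\langle\gamma'',\mathbf n\rangle_\epsilon/|\gamma'|_\epsilon^2$. The energy is $$E_\alpha[\gamma]=\int_\gamma\mathsf d^\alpha ds=\int u^\alpha\sqrt{u'^2+\sinh^2(u)v'^2}\,dt,$$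 where $\mathsf d$ is the distance to $N$. An $\alpha$-stationary curve is a critical point of $E_\alpha$, i.e. $(u,v)$ satisfies its Euler–Lagrange equations. Throughout the paper, $\alpha\neq0$ and curves avoid $N$. *)

From Stdlib Require Import Reals.
From Coquelicot Require Import Coquelicot.
Open Scope R_scope.

Definition vec3 := (R * R * R)%type.
Definition c1 (x : vec3) : R := fst (fst x).
Definition c2 (x : vec3) : R := snd (fst x).
Definition c3 (x : vec3) : R := snd x.

Definition lor (x y : vec3) : R := c1 x * c1 y + c2 x * c2 y - c3 x * c3 y.
Definition lnorm (x : vec3) : R := sqrt (Rabs (lor x x)).

Definition H2 (p : vec3) : Prop := c1 p ^ 2 + c2 p ^ 2 - c3 p ^ 2 = -1 /\ 0 < c3 p.
Definition Npole : vec3 := (0, 0, 1).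
Definition Psi (u v : R) : vec3 := (sinh u * cos v, sinh u * sin v, cosh u).

Definition coth (x : R) : R := cosh x / sinh x.

(* Geodesics of H2: intersections of H2 with a plane through the origin
   with (Euclidean) normal vector c <> 0. *)
Definition geodesic (c : vec3) : vec3 -> Prop :=
  fun p => H2 p /\ c1 c * c1 p + c2 c * c2 p + c3 c * c3 p = 0.

Definition circleN (r : R) : vec3 -> Prop := fun p => exists w, p = Psi r w.

Definition inI (a b : Rbar) (t : R) : Prop := Rbar_lt a t /\ Rbar_lt t b.

Definition smooth_on (a b : Rbar) (f : R -> R) : Prop :=
  forall n t, inI a b t -> ex_derive (Derive_n f n) t.

Definition gamma (u v : R -> R) (t : R) : vec3 := Psi (u t) (v t).
Definition gamma1 (u v : R -> R) (t : R) : vec3 :=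
  (Derive (fun s => c1 (gamma u v s)) t,
   Derive (fun s => c2 (gamma u v s)) t,
   Derive (fun s => c3 (gamma u v s)) t).
Definition gamma2 (u v : R -> R) (t : R) : vec3 :=
  (Derive (Derive (fun s => c1 (gamma u v s))) t,
   Derive (Derive (fun s => c2 (gamma u v s))) t,
   Derive (Derive (fun s => c3 (gamma u v s))) t).

Definition regular_on (a b : Rbar) (u v : R -> R) : Prop :=
  forall t, inI a b t -> gamma1 u v t <> (0, 0, 0).

Definition nvec (u v : R -> R) (t : R) : vec3 :=
  let u' := Derive u t in let v' := Derive v t in
  let s := lnorm (gamma1 u v t) in
  ((u' * sin (v t) + sinh (u t) * cosh (u t) * v' * cos (v t)) / s,
   (sinh (u t) * cosh (u t) * v' * sin (v t) - u' * cos (v t)) / s,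
   (sinh (u t) ^ 2 * v') / s).

Definition curvature (u v : R -> R) (t : R) : R :=
  lor (gamma2 u v t) (nvec u v t) / (lnorm (gamma1 u v t)) ^ 2.

Definition constant_curvature_on (a b : Rbar) (u v : R -> R) : Prop :=
  exists k, forall t, inI a b t -> curvature u v t = k.

(* Lagrangian of E_alpha: L(u, v, u', v') = u^alpha sqrt(u'^2 + sinh^2 u v'^2). *)
Definition Lag (alpha x y p q : R) : R :=
  Rpower x alpha * sqrt (p ^ 2 + sinh x ^ 2 * q ^ 2).

(* Euler-Lagrange equations of E_alpha along (u,v) on the interval. *)
Definition stationary (alpha : R) (a b : Rbar) (u v : R -> R) : Prop :=
  forall t, inI a b t ->
    is_derive (fun s => Derive (fun p => Lag alpha (u s) (v s) p (Derive v s)) (Derive u s)) t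
              (Derive (fun x => Lag alpha x (v t) (Derive u t) (Derive v t)) (u t))
 /\ is_derive (fun s => Derive (fun q => Lag alpha (u s) (v s) (Derive u s) q) (Derive v s)) t
              (Derive (fun y => Lag alpha (u t) y (Derive u t) (Derive v t)) (v t)).

Definition contained_in_geodesic_through_N (a b : Rbar) (u v : R -> R) : Prop :=
  exists c : vec3, c <> (0, 0, 0) /\ geodesic c Npole /\
    forall t, inI a b t -> geodesic c (gamma u v t).

Definition contained_in_circleN (r : R) (a b : Rbar) (u v : R -> R) : Prop :=
  forall t, inI a b t -> circleN r (gamma u v t).

(* The Lagrangian u^alpha |gamma'| is homogeneous of degree one in the velocity, so the two
   Euler-Lagrange expressions E_u, E_v satisfy u' E_u + v' E_v = 0, while
   sinh(u)^2 v' E_u - u' E_v is a positive multiple of kappa u |gamma'| - alpha sinh(u) v'.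
   Hence gamma is stationary iff kappa u |gamma'| = alpha sinh(u) v' along it.
   If kappa = 0 this forces v' = 0 (alpha being nonzero): gamma lies on a meridian, a geodesic
   through N; conversely every meridian satisfies the relation.
   If kappa = k <> 0, the conserved v-momentum u^alpha sinh(u)^2 v' / |gamma'| equals
   (k / alpha) u^(alpha+1) sinh u, so u^(alpha+1) sinh u is constant along gamma.  As
   sinh x cosh x > x, the function x^(alpha+1) sinh x has no degenerate critical point, so u is
   constant: gamma lies on a circle of radius r about N, where the relation reads
   alpha = - r coth r. *)

From Pilot Require Import Defs.
From Stdlib Require Import Reals Lra Psatz.
From Coquelicot Require Import Coquelicot.
Open Scope R_scope.

Lemma inI_locally a b t : inI a b t -> locally t (inI a b).
Proof.
  intros [Hat Htb]. destruct (Rbar_lt_locally a b t Hat Htb) as [d Hd].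
  exists d. exact Hd.
Qed.

Lemma inI_nonempty a b : Rbar_lt a b -> exists t, inI a b t.
Proof.
  unfold inI. destruct a as [a| |], b as [b| |]; simpl; try tauto; intros Hab.
  - exists ((a + b) / 2). lra.
  - exists (a + 1). lra.
  - exists (b - 1). lra.
  - exists 0. tauto.
Qed.

Lemma inI_between a b x y z :
  inI a b x -> inI a b y -> Rmin x y <= z <= Rmax x y -> inI a b z.
Proof.
  unfold inI, Rmin, Rmax. destruct (Rle_dec x y);
  destruct a as [a| |], b as [b| |]; simpl; lra.
Qed.

Lemma eq_on_inI_of_is_derive_0 a b (f : R -> R) :
  (forall t, inI a b t -> is_derive f t 0) ->
  forall x y, inI a b x -> inI a b y -> f x = f y.
Proof.
  intros Hf x y Hx Hy.
  assert (Hz : forall z, Rmin x y <= z <= Rmax x y -> inI a b z)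
    by (intros z; apply inI_between; assumption).
  destruct (MVT_gen f x y (fun _ => 0)) as [c [_ Hc]].
  - intros z Hxz. apply Hf, Hz. lra.
  - intros z Hxz. apply (proj2 (continuity_pt_filterlim _ _)).
    apply (ex_derive_continuous f z). exists 0. apply Hf, Hz. exact Hxz.
  - lra.
Qed.

Lemma eq_on_inI_of_Derive_eq0 a b (f : R -> R) :
  (forall t, inI a b t -> ex_derive f t) -> (forall t, inI a b t -> Derive f t = 0) ->
  forall x y, inI a b x -> inI a b y -> f x = f y.
Proof.
  intros Hd H0. apply eq_on_inI_of_is_derive_0. intros t Ht.
  rewrite <- (H0 t Ht). apply Derive_correct, Hd, Ht.
Qed.

Lemma is_derive_loc_iff (f g : R -> R) (t df l : R) :
  locally t (fun s => f s = g s) -> is_derive f t df -> (is_derive g t l <-> df = l).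
Proof.
  intros Hfg Hf. split.
  - intros Hg. rewrite <- (is_derive_unique _ _ _ Hg).
    exact (eq_sym (is_derive_unique _ _ _ (is_derive_ext_loc _ _ _ _ Hfg Hf))).
  - intros <-. exact (is_derive_ext_loc _ _ _ _ Hfg Hf).
Qed.

Lemma Derive_locally_const (f : R -> R) (c t : R) :
  locally t (fun s => f s = c) -> Derive f t = 0.
Proof.
  intros Hc. apply is_derive_unique, (is_derive_ext_loc (fun _ => c)).
  - exact (filter_imp _ _ (fun s Hs => eq_sym Hs) Hc).
  - exact (is_derive_const c t).
Qed.

Lemma Derive_Derive_eq0_on_inI a b (f : R -> R) t : inI a b t ->
  (forall s, inI a b s -> Derive f s = 0) -> Derive (Derive f) t = 0.
Proof.
  intros Ht Hf. apply (Derive_locally_const _ 0).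
  exact (filter_imp _ _ Hf (inI_locally a b t Ht)).
Qed.

Lemma locally_neq0_of_ex_derive (f : R -> R) t :
  ex_derive f t -> f t <> 0 -> locally t (fun s => f s <> 0).
Proof.
  intros Hd Hn. apply (ex_derive_continuous f t Hd (fun y => y <> 0)).
  exists (mkposreal _ (Rabs_pos_lt _ Hn)). intros y Hy Hy0.
  change (Rabs (y - f t) < Rabs (f t)) in Hy.
  rewrite Hy0, Rminus_0_l, Rabs_Ropp in Hy. lra.
Qed.

Lemma Derive_eq0_of_simple_zeros a b (h dh u : R -> R) :
  (forall x, is_derive h x (dh x)) ->
  (forall t, inI a b t -> ex_derive u t /\ ex_derive (Derive u) t) ->
  (forall t, inI a b t -> h (u t) = 0 -> dh (u t) <> 0) ->
  (forall t, inI a b t -> h (u t) * Derive u t = 0) ->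
  forall t, inI a b t -> Derive u t = 0.
Proof.
  intros Hh Hu Hsimple Hprod t Ht.
  destruct (Req_dec (Derive u t) 0) as [|Hu't]; [assumption|exfalso].
  destruct (Hu t Ht) as [Hu1 Hu2].
  assert (Hzero : locally t (fun s => h (u s) = 0)).
  { apply (filter_imp (fun s => inI a b s /\ Derive u s <> 0)).
    - intros s [Hs Hus]. destruct (Rmult_integral _ _ (Hprod s Hs)); tauto.
    - apply filter_and; [exact (inI_locally a b t Ht)|].
      exact (locally_neq0_of_ex_derive _ t Hu2 Hu't). }
  assert (Hcomp : is_derive (fun s => h (u s)) t (Derive u t * dh (u t)))
    by exact (is_derive_comp h u t _ _ (Hh (u t)) (Derive_correct u t Hu1)).
  assert (Hd : Derive u t * dh (u t) = 0).
  { rewrite <- (is_derive_unique _ _ _ Hcomp). exact (Derive_locally_const _ 0 t Hzero). }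
  apply (Hsimple t Ht (locally_singleton _ _ Hzero)).
  destruct (Rmult_integral _ _ Hd); tauto.
Qed.

Lemma sinh_pos x : 0 < x -> 0 < sinh x.
Proof. intros Hx. rewrite <- sinh_0. exact (sinh_lt 0 x Hx). Qed.

Lemma cosh_pos x : 0 < cosh x.
Proof. unfold cosh. pose proof (exp_pos x). pose proof (exp_pos (- x)). lra. Qed.

Lemma cosh2_sub_sinh2 x : cosh x ^ 2 - sinh x ^ 2 = 1.
Proof. unfold cosh, sinh. rewrite exp_Ropp. pose proof (exp_pos x). field. lra. Qed.

Lemma cosh_inj_pos x y : 0 < x -> 0 < y -> cosh x = cosh y -> x = y.
Proof.
  intros Hx Hy Hc. pose proof (sinh_pos x Hx). pose proof (sinh_pos y Hy).
  assert (Hs : sinh x = sinh y).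
  { pose proof (cosh2_sub_sinh2 x). pose proof (cosh2_sub_sinh2 y). rewrite Hc in *. nra. }
  destruct (Rtotal_order x y) as [Hlt|[|Hgt]]; [|assumption|].
  - pose proof (sinh_lt _ _ Hlt). lra.
  - pose proof (sinh_lt _ _ Hgt). lra.
Qed.

Lemma lt_sinh_mul_cosh x : 0 < x -> x < sinh x * cosh x.
Proof.
  intros Hx.
  destruct (MVT_cor2 (fun y => sinh y * cosh y - y) (fun y => 2 * sinh y ^ 2) 0 x Hx)
    as [c [Hc Hcx]].
  - intros c _. apply is_derive_Reals. unfold sinh, cosh. auto_derive; [easy|].
    rewrite !exp_Ropp. pose proof (exp_pos c). field. lra.
  - rewrite sinh_0, cosh_0 in Hc. pose proof (sinh_pos c (proj1 Hcx)).
    assert (0 < 2 * sinh c ^ 2 * (x - 0)) by (apply Rmult_lt_0_compat; nra). lra.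
Qed.

(* x^(alpha+1) sinh x has derivative x^alpha times the first expression, whose derivative is
   the second one. *)
Lemma sinh_cosh_simple_zero alpha x : 0 < x ->
  (alpha + 1) * sinh x + x * cosh x = 0 -> (alpha + 2) * cosh x + x * sinh x <> 0.
Proof.
  intros Hx Hh Hdh. pose proof (lt_sinh_mul_cosh x Hx).
  assert (sinh x * ((alpha + 2) * cosh x + x * sinh x)
          - cosh x * ((alpha + 1) * sinh x + x * cosh x)
          = sinh x * cosh x - x * (cosh x ^ 2 - sinh x ^ 2)) as E by ring.
  rewrite Hh, Hdh, cosh2_sub_sinh2 in E. lra.
Qed.

Lemma cos2_add_sin2 x : cos x ^ 2 + sin x ^ 2 = 1.
Proof. rewrite <- (sin2_cos2 x). unfold Rsqr. ring. Qed.

(* [auto_derive] leaves eta-expanded [Derive (fun x => f x)] terms, on which [field] fails. *)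
Ltac fold_eta_Derive :=
  repeat match goal with |- context [Derive (fun y => ?f y)] => change (fun y => f y) with f end.

Lemma vec3_eq (x1 x2 x3 y1 y2 y3 : R) :
  x1 = y1 -> x2 = y2 -> x3 = y3 -> (x1, x2, x3) = (y1, y2, y3).
Proof. intros -> -> ->. reflexivity. Qed.

Lemma lor_rotate p q z p' q' z' c s :
  lor (p * c - q * s, p * s + q * c, z) (p' * c - q' * s, p' * s + q' * c, z')
  = (p * p' + q * q') * (c ^ 2 + s ^ 2) - z * z'.
Proof. unfold lor, Defs.c1, Defs.c2, Defs.c3. simpl. ring. Qed.

(* [auto_derive] produces several syntactically different copies of the same radicand. *)
Ltac unify_sqrt T :=
  repeat match goal with |- context [sqrt ?e] =>
    tryif constr_eq e T then fail else replace (sqrt e) with (sqrt T) by (f_equal; field)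
  end.

Lemma Derive_Lag_p alpha x y p q : 0 < p ^ 2 + sinh x ^ 2 * q ^ 2 ->
  Derive (fun p => Lag alpha x y p q) p
  = Rpower x alpha * p / sqrt (p ^ 2 + sinh x ^ 2 * q ^ 2).
Proof.
  intros H. apply is_derive_unique. unfold Lag. auto_derive; [assumption|].
  unify_sqrt (p ^ 2 + sinh x ^ 2 * q ^ 2). pose proof (sqrt_lt_R0 _ H). field. lra.
Qed.

Lemma Derive_Lag_q alpha x y p q : 0 < p ^ 2 + sinh x ^ 2 * q ^ 2 ->
  Derive (fun q => Lag alpha x y p q) q
  = Rpower x alpha * sinh x ^ 2 * q / sqrt (p ^ 2 + sinh x ^ 2 * q ^ 2).
Proof.
  intros H. apply is_derive_unique. unfold Lag. auto_derive; [assumption|].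
  unify_sqrt (p ^ 2 + sinh x ^ 2 * q ^ 2). pose proof (sqrt_lt_R0 _ H). field. lra.
Qed.

Lemma Derive_Lag_y alpha x y p q : Derive (fun y => Lag alpha x y p q) y = 0.
Proof. apply is_derive_unique. unfold Lag. auto_derive; [easy|ring]. Qed.

Lemma Derive_Lag_x alpha x y p q : 0 < x -> 0 < p ^ 2 + sinh x ^ 2 * q ^ 2 ->
  Derive (fun x => Lag alpha x y p q) x
  = alpha * Rpower x alpha / x * sqrt (p ^ 2 + sinh x ^ 2 * q ^ 2)
    + Rpower x alpha * sinh x * cosh x * q ^ 2 / sqrt (p ^ 2 + sinh x ^ 2 * q ^ 2).
Proof.
  intros Hx H. apply is_derive_unique. unfold Lag.
  pose proof (sqrt_lt_R0 _ H). unfold Rpower, sinh, cosh in *. auto_derive.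
  - split; [exact Hx|split; [|exact I]]. apply (Rlt_le_trans _ _ _ H). right. field.
  - unify_sqrt (p ^ 2 + ((exp x - exp (- x)) / 2) ^ 2 * q ^ 2).
    rewrite !exp_Ropp in *. pose proof (exp_pos x). field. lra.
Qed.

Section CurveGeometry.

Variables u v : R -> R.

Local Notation u1 := (Derive u).
Local Notation v1 := (Derive v).
Local Notation u2 := (Derive (Derive u)).
Local Notation v2 := (Derive (Derive v)).

Definition speed2 t := u1 t ^ 2 + sinh (u t) ^ 2 * v1 t ^ 2.
Definition speed t := sqrt (speed2 t).

Definition curvature_numerator t :=
  sinh (u t) * u2 t * v1 t - sinh (u t) ^ 2 * cosh (u t) * v1 t ^ 3
  - u1 t * v2 t * sinh (u t) - 2 * u1 t ^ 2 * v1 t * cosh (u t).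

Lemma gamma1_eq t : ex_derive u t -> ex_derive v t ->
  gamma1 u v t =
  (cosh (u t) * u1 t * cos (v t) - sinh (u t) * v1 t * sin (v t),
   cosh (u t) * u1 t * sin (v t) + sinh (u t) * v1 t * cos (v t),
   sinh (u t) * u1 t).
Proof.
  intros Hu Hv. unfold gamma1, gamma, Psi, Defs.c1, Defs.c2, Defs.c3. simpl.
  apply vec3_eq; apply is_derive_unique; unfold sinh, cosh;
    auto_derive; try easy; fold_eta_Derive; field.
Qed.

Lemma lnorm_gamma1 t : ex_derive u t -> ex_derive v t -> lnorm (gamma1 u v t) = speed t.
Proof.
  intros Hu Hv. rewrite gamma1_eq by assumption. unfold lnorm, speed.
  replace (_, _, _) with
    ((cosh (u t) * u1 t) * cos (v t) - (sinh (u t) * v1 t) * sin (v t),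
     (cosh (u t) * u1 t) * sin (v t) + (sinh (u t) * v1 t) * cos (v t),
     sinh (u t) * u1 t) by (apply vec3_eq; ring).
  rewrite lor_rotate, cos2_add_sin2.
  replace (_ - _) with (u1 t ^ 2 * (cosh (u t) ^ 2 - sinh (u t) ^ 2) + sinh (u t) ^ 2 * v1 t ^ 2)
    by ring.
  rewrite cosh2_sub_sinh2, Rmult_1_r, Rabs_pos_eq; [reflexivity|].
  unfold speed2. nra.
Qed.

Lemma speed2_pos t : ex_derive u t -> ex_derive v t -> 0 < u t ->
  gamma1 u v t <> (0, 0, 0) -> 0 < speed2 t.
Proof.
  intros Hu Hv Hpos Hreg. unfold speed2.
  assert (Hsq : forall x, x <> 0 -> 0 < x ^ 2)
    by (intros x Hx; pose proof (pow2_ge_0 x); pose proof (pow_nonzero x 2 Hx); lra).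
  pose proof (pow2_ge_0 (u1 t)). pose proof (pow2_ge_0 (v1 t)).
  pose proof (Hsq _ (Rgt_not_eq _ _ (sinh_pos _ Hpos))).
  destruct (Req_dec (u1 t) 0) as [Hu0|Hu0]; [destruct (Req_dec (v1 t) 0) as [Hv0|Hv0]|].
  - exfalso. apply Hreg. rewrite gamma1_eq, Hu0, Hv0 by assumption. apply vec3_eq; ring.
  - pose proof (Hsq _ Hv0). nra.
  - pose proof (Hsq _ Hu0). nra.
Qed.

Lemma gamma2_eq t :
  locally t (fun s => ex_derive u s /\ ex_derive v s) ->
  ex_derive u1 t -> ex_derive v1 t ->
  gamma2 u v t =
  ((sinh (u t) * u1 t ^ 2 + cosh (u t) * u2 t - sinh (u t) * v1 t ^ 2) * cos (v t)
     - (2 * cosh (u t) * u1 t * v1 t + sinh (u t) * v2 t) * sin (v t),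
   (sinh (u t) * u1 t ^ 2 + cosh (u t) * u2 t - sinh (u t) * v1 t ^ 2) * sin (v t)
     + (2 * cosh (u t) * u1 t * v1 t + sinh (u t) * v2 t) * cos (v t),
   cosh (u t) * u1 t ^ 2 + sinh (u t) * u2 t).
Proof.
  intros Hloc Hu2 Hv2. destruct (locally_singleton _ _ Hloc) as [Hu Hv].
  assert (Hcomp : forall f g : R -> R,
    (forall s, ex_derive u s -> ex_derive v s -> Derive f s = g s) ->
    Derive (Derive f) t = Derive g t).
  { intros f g Hfg. apply Derive_ext_loc.
    apply (filter_imp _ _ (fun s Hs => Hfg s (proj1 Hs) (proj2 Hs)) Hloc). }
  unfold gamma2. apply vec3_eq;
    [ rewrite (Hcomp _ _ (fun s Hus Hvs => f_equal Defs.c1 (gamma1_eq s Hus Hvs)))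
    | rewrite (Hcomp _ _ (fun s Hus Hvs => f_equal Defs.c2 (gamma1_eq s Hus Hvs)))
    | rewrite (Hcomp _ _ (fun s Hus Hvs => f_equal Defs.c3 (gamma1_eq s Hus Hvs))) ];
    apply is_derive_unique; cbn; unfold sinh, cosh;
    (auto_derive; [tauto|fold_eta_Derive; field]).
Qed.

Lemma nvec_eq t :
  nvec u v t =
  ((sinh (u t) * cosh (u t) * v1 t / lnorm (gamma1 u v t)) * cos (v t)
     - (- u1 t / lnorm (gamma1 u v t)) * sin (v t),
   (sinh (u t) * cosh (u t) * v1 t / lnorm (gamma1 u v t)) * sin (v t)
     + (- u1 t / lnorm (gamma1 u v t)) * cos (v t),
   sinh (u t) ^ 2 * v1 t / lnorm (gamma1 u v t)).
Proof. unfold nvec. apply vec3_eq; unfold Rdiv; ring. Qed.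

Lemma curvature_eq t :
  locally t (fun s => ex_derive u s /\ ex_derive v s) ->
  ex_derive u1 t -> ex_derive v1 t -> 0 < speed2 t ->
  curvature u v t * speed t ^ 3 = curvature_numerator t.
Proof.
  intros Hloc Hu2 Hv2 Hspeed. destruct (locally_singleton _ _ Hloc) as [Hu Hv].
  unfold curvature. rewrite gamma2_eq, nvec_eq, lor_rotate, cos2_add_sin2, lnorm_gamma1
    by assumption.
  pose proof (sqrt_lt_R0 _ Hspeed). fold (speed t) in *.
  unfold curvature_numerator. unfold sinh, cosh. rewrite exp_Ropp.
  pose proof (exp_pos (u t)). field. lra.
Qed.

End CurveGeometry.

Section EulerLagrange.

Variable alpha : R.
Variables u v : R -> R.

Local Notation u1 := (Derive u).
Local Notation v1 := (Derive v).
Local Notation u2 := (Derive (Derive u)).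
Local Notation v2 := (Derive (Derive v)).
Local Notation speed2 := (speed2 u v).
Local Notation speed := (speed u v).
Local Notation curvature_numerator := (curvature_numerator u v).

Definition momentum_u t := Rpower (u t) alpha * u1 t / speed t.
Definition momentum_v t := Rpower (u t) alpha * sinh (u t) ^ 2 * v1 t / speed t.
Definition force_u t :=
  alpha * Rpower (u t) alpha / u t * speed t
  + Rpower (u t) alpha * sinh (u t) * cosh (u t) * v1 t ^ 2 / speed t.
Definition dspeed t :=
  (u1 t * u2 t + sinh (u t) * cosh (u t) * u1 t * v1 t ^ 2 + sinh (u t) ^ 2 * v1 t * v2 t)
  / speed t.
Definition dmomentum_u t :=
  (alpha * Rpower (u t) alpha / u t * u1 t ^ 2 + Rpower (u t) alpha * u2 t) / speed t
  - Rpower (u t) alpha * u1 t * dspeed t / speed t ^ 2.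
Definition dmomentum_v t :=
  (alpha * Rpower (u t) alpha / u t * u1 t * sinh (u t) ^ 2 * v1 t
   + 2 * Rpower (u t) alpha * sinh (u t) * cosh (u t) * u1 t * v1 t
   + Rpower (u t) alpha * sinh (u t) ^ 2 * v2 t) / speed t
  - Rpower (u t) alpha * sinh (u t) ^ 2 * v1 t * dspeed t / speed t ^ 2.

Lemma is_derive_momentum_u t :
  ex_derive u t -> ex_derive v t -> ex_derive u1 t -> ex_derive v1 t ->
  0 < u t -> 0 < speed2 t -> is_derive momentum_u t (dmomentum_u t).
Proof.
  intros Hu Hv Hu2 Hv2 Hpos Hspeed. pose proof (sqrt_lt_R0 _ Hspeed).
  unfold momentum_u, dmomentum_u, dspeed, speed, speed2, Rpower, sinh, cosh in *.
  auto_derive.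
  - repeat split; try assumption; try (apply (Rlt_le_trans _ _ _ Hspeed); right; field).
    unify_sqrt (u1 t ^ 2 + ((exp (u t) - exp (- u t)) / 2) ^ 2 * v1 t ^ 2). lra.
  - fold_eta_Derive. unify_sqrt (u1 t ^ 2 + ((exp (u t) - exp (- u t)) / 2) ^ 2 * v1 t ^ 2).
    rewrite !exp_Ropp in *. pose proof (exp_pos (u t)). field. repeat split; lra.
Qed.

Lemma is_derive_momentum_v t :
  ex_derive u t -> ex_derive v t -> ex_derive u1 t -> ex_derive v1 t ->
  0 < u t -> 0 < speed2 t -> is_derive momentum_v t (dmomentum_v t).
Proof.
  intros Hu Hv Hu2 Hv2 Hpos Hspeed. pose proof (sqrt_lt_R0 _ Hspeed).
  unfold momentum_v, dmomentum_v, dspeed, speed, speed2, Rpower, sinh, cosh in *.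
  auto_derive.
  - repeat split; try assumption; try (apply (Rlt_le_trans _ _ _ Hspeed); right; field).
    unify_sqrt (u1 t ^ 2 + ((exp (u t) - exp (- u t)) / 2) ^ 2 * v1 t ^ 2). lra.
  - fold_eta_Derive. unify_sqrt (u1 t ^ 2 + ((exp (u t) - exp (- u t)) / 2) ^ 2 * v1 t ^ 2).
    rewrite !exp_Ropp in *. pose proof (exp_pos (u t)). field. repeat split; lra.
Qed.

(* Noether's identity for a Lagrangian that is homogeneous of degree one in the velocity. *)
Lemma euler_lagrange_homogeneity t : 0 < u t -> 0 < speed2 t ->
  u1 t * (dmomentum_u t - force_u t) + v1 t * dmomentum_v t = 0.
Proof.
  intros Hpos Hspeed. assert (HS : 0 < speed t) by exact (sqrt_lt_R0 _ Hspeed).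
  assert (HS2 : speed t ^ 2 = speed2 t) by (apply pow2_sqrt; lra).
  unfold dmomentum_u, dmomentum_v, force_u, dspeed in *. unfold speed2 in HS2.
  set (S := speed t) in *. set (A := Rpower (u t) alpha).
  field_simplify_eq; [|split; apply Rgt_not_eq; assumption].
  replace (S ^ 4) with ((S ^ 2) ^ 2) by ring. rewrite HS2. ring.
Qed.

Lemma euler_lagrange_curvature t : 0 < u t -> 0 < speed2 t ->
  sinh (u t) ^ 2 * v1 t * (dmomentum_u t - force_u t) - u1 t * dmomentum_v t
  = Rpower (u t) alpha * sinh (u t) / (speed t * u t)
    * (curvature_numerator t * u t - alpha * sinh (u t) * v1 t * speed2 t).
Proof.
  intros Hpos Hspeed. assert (HS : 0 < speed t) by exact (sqrt_lt_R0 _ Hspeed).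
  assert (HS2 : speed t ^ 2 = speed2 t) by (apply pow2_sqrt; lra).
  rewrite <- HS2. unfold dmomentum_u, dmomentum_v, force_u, dspeed, curvature_numerator.
  field. lra.
Qed.

Lemma euler_lagrange_iff_at t : 0 < u t -> 0 < speed2 t ->
  (dmomentum_u t = force_u t /\ dmomentum_v t = 0)
  <-> curvature_numerator t * u t = alpha * sinh (u t) * v1 t * speed2 t.
Proof.
  intros Hpos Hspeed.
  pose proof (euler_lagrange_homogeneity t Hpos Hspeed) as Hhom.
  pose proof (euler_lagrange_curvature t Hpos Hspeed) as Hcurv.
  assert (HK : 0 < Rpower (u t) alpha * sinh (u t) / (speed t * u t)).
  { pose proof (exp_pos (alpha * ln (u t))). pose proof (sinh_pos _ Hpos).
    pose proof (sqrt_lt_R0 _ Hspeed). fold (speed t) in *.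
    apply Rdiv_lt_0_compat; apply Rmult_lt_0_compat; assumption. }
  set (R1 := dmomentum_u t - force_u t) in *. set (R2 := dmomentum_v t) in *.
  split.
  - intros [H1 H2]. assert (HR1 : R1 = 0) by (unfold R1; lra).
    rewrite HR1, H2 in Hcurv.
    assert (HD : curvature_numerator t * u t - alpha * sinh (u t) * v1 t * speed2 t = 0) by nra.
    lra.
  - intros HD. rewrite HD, Rminus_diag, Rmult_0_r in Hcurv.
    assert (E1 : speed2 t * R1 = v1 t * (sinh (u t) ^ 2 * v1 t * R1 - u1 t * R2)
                                + u1 t * (u1 t * R1 + v1 t * R2)) by (unfold speed2; ring).
    assert (E2 : speed2 t * R2 = sinh (u t) ^ 2 * v1 t * (u1 t * R1 + v1 t * R2)
                                - u1 t * (sinh (u t) ^ 2 * v1 t * R1 - u1 t * R2))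
      by (unfold speed2; ring).
    rewrite Hcurv, Hhom in E1, E2.
    assert (HR1 : R1 = 0) by nra. assert (HR2 : R2 = 0) by nra.
    unfold R1, R2 in *. split; lra.
Qed.

Definition euler_lagrange_at t :=
  is_derive (fun s => Derive (fun p => Lag alpha (u s) (v s) p (v1 s)) (u1 s)) t
    (Derive (fun x => Lag alpha x (v t) (u1 t) (v1 t)) (u t))
  /\ is_derive (fun s => Derive (fun q => Lag alpha (u s) (v s) (u1 s) q) (v1 s)) t
    (Derive (fun y => Lag alpha (u t) y (u1 t) (v1 t)) (v t)).

Lemma euler_lagrange_at_iff t :
  ex_derive u t -> ex_derive v t -> ex_derive u1 t -> ex_derive v1 t -> 0 < u t ->
  locally t (fun s => 0 < speed2 s) ->
  euler_lagrange_at t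
  <-> curvature_numerator t * u t = alpha * sinh (u t) * v1 t * speed2 t.
Proof.
  intros Hu Hv Hu2 Hv2 Hpos Hloc. pose proof (locally_singleton _ _ Hloc) as Hspeed.
  assert (Hmu : locally t (fun s =>
    momentum_u s = Derive (fun p => Lag alpha (u s) (v s) p (v1 s)) (u1 s)))
    by exact (filter_imp _ _ (fun s Hs => eq_sym (Derive_Lag_p _ _ _ _ _ Hs)) Hloc).
  assert (Hmv : locally t (fun s =>
    momentum_v s = Derive (fun q => Lag alpha (u s) (v s) (u1 s) q) (v1 s)))
    by exact (filter_imp _ _ (fun s Hs => eq_sym (Derive_Lag_q _ _ _ _ _ Hs)) Hloc).
  assert (Hforce : Derive (fun x => Lag alpha x (v t) (u1 t) (v1 t)) (u t) = force_u t)
    by exact (Derive_Lag_x _ _ _ _ _ Hpos Hspeed).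
  unfold euler_lagrange_at. rewrite Hforce, Derive_Lag_y.
  rewrite (is_derive_loc_iff _ _ _ _ _ Hmu (is_derive_momentum_u t Hu Hv Hu2 Hv2 Hpos Hspeed)).
  rewrite (is_derive_loc_iff _ _ _ _ _ Hmv (is_derive_momentum_v t Hu Hv Hu2 Hv2 Hpos Hspeed)).
  exact (euler_lagrange_iff_at t Hpos Hspeed).
Qed.

End EulerLagrange.

Lemma H2_Psi x w : H2 (Psi x w).
Proof.
  unfold H2, Psi, Defs.c1, Defs.c2, Defs.c3. cbn [fst snd]. split; [|apply cosh_pos].
  replace ((sinh x * cos w) ^ 2 + (sinh x * sin w) ^ 2)
    with (sinh x ^ 2 * (cos w ^ 2 + sin w ^ 2)) by ring.
  rewrite cos2_add_sin2. pose proof (cosh2_sub_sinh2 x). lra.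
Qed.

Section StationaryCurves.

Variables (alpha : R) (a b : Rbar) (u v : R -> R).

Hypothesis Hab : Rbar_lt a b.
Hypothesis Hu : forall t, inI a b t -> ex_derive u t /\ ex_derive (Derive u) t.
Hypothesis Hv : forall t, inI a b t -> ex_derive v t /\ ex_derive (Derive v) t.
Hypothesis Hpos : forall t, inI a b t -> 0 < u t.
Hypothesis Hspeed : forall t, inI a b t -> 0 < speed2 u v t.

Lemma stationary_iff_curvature :
  stationary alpha a b u v <-> forall t, inI a b t ->
    curvature_numerator u v t * u t = alpha * sinh (u t) * Derive v t * speed2 u v t.
Proof.
  assert (Hat : forall t, inI a b t -> euler_lagrange_at alpha u v t <->
    curvature_numerator u v t * u t = alpha * sinh (u t) * Derive v t * speed2 u v t).
  { intros t Ht. destruct (Hu t Ht), (Hv t Ht).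
    apply euler_lagrange_at_iff; try assumption; [apply Hpos; exact Ht|].
    exact (filter_imp _ _ Hspeed (inI_locally a b t Ht)). }
  split; intros H t Ht; apply (Hat t Ht), H, Ht.
Qed.

Lemma stationary_momentum_v_const : stationary alpha a b u v ->
  forall s t, inI a b s -> inI a b t -> momentum_v alpha u v s = momentum_v alpha u v t.
Proof.
  intros Hst. apply eq_on_inI_of_is_derive_0. intros t Ht.
  destruct (Hu t Ht), (Hv t Ht).
  assert (Hel : dmomentum_u alpha u v t = force_u alpha u v t /\ dmomentum_v alpha u v t = 0).
  { apply euler_lagrange_iff_at; [apply Hpos, Ht|apply Hspeed, Ht|].
    apply stationary_iff_curvature; assumption. }
  rewrite <- (proj2 Hel). apply is_derive_momentum_v; auto.
Qed.

Lemma stationary_curvature_eq t : stationary alpha a b u v -> inI a b t ->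
  curvature u v t * (u t * speed u v t) = alpha * sinh (u t) * Derive v t.
Proof.
  intros Hst Ht. destruct (Hu t Ht) as [_ Hu2], (Hv t Ht) as [_ Hv2].
  assert (Hloc : locally t (fun s => ex_derive u s /\ ex_derive v s)).
  { apply (filter_imp (inI a b)); [|exact (inI_locally a b t Ht)].
    intros s Hs. split; [apply (Hu s Hs)|apply (Hv s Hs)]. }
  pose proof (curvature_eq u v t Hloc Hu2 Hv2 (Hspeed t Ht)) as Hk.
  pose proof (proj1 stationary_iff_curvature Hst t Ht) as Hel.
  assert (HS : 0 < speed u v t) by exact (sqrt_lt_R0 _ (Hspeed t Ht)).
  assert (HS2 : speed u v t ^ 2 = speed2 u v t) by (apply pow2_sqrt; apply Rlt_le, Hspeed, Ht).
  rewrite <- Hk, <- HS2 in Hel.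
  apply (Rmult_eq_reg_r (speed u v t ^ 2)); [|apply pow_nonzero; lra].
  rewrite <- Hel. ring.
Qed.

Lemma stationary_flat_v_const : alpha <> 0 -> stationary alpha a b u v ->
  (forall t, inI a b t -> curvature u v t = 0) -> forall t, inI a b t -> Derive v t = 0.
Proof.
  intros Hal Hst Hflat t Ht.
  pose proof (stationary_curvature_eq t Hst Ht) as Hk.
  rewrite Hflat, Rmult_0_l in Hk by exact Ht.
  pose proof (sinh_pos _ (Hpos t Ht)).
  apply (Rmult_eq_reg_l (alpha * sinh (u t))).
  - rewrite <- Hk. ring.
  - apply Rmult_integral_contrapositive_currified; lra.
Qed.

Lemma stationary_weight_eq k t : stationary alpha a b u v ->
  (forall t, inI a b t -> curvature u v t = k) -> inI a b t ->
  k * (Rpower (u t) alpha * u t * sinh (u t)) = alpha * momentum_v alpha u v t.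
Proof.
  intros Hst Hk Ht.
  pose proof (stationary_curvature_eq t Hst Ht) as Hrel. rewrite Hk in Hrel by exact Ht.
  assert (HS : 0 < speed u v t) by exact (sqrt_lt_R0 _ (Hspeed t Ht)).
  unfold momentum_v.
  replace (alpha * (Rpower (u t) alpha * sinh (u t) ^ 2 * Derive v t / speed u v t))
    with (Rpower (u t) alpha * sinh (u t) / speed u v t * (alpha * sinh (u t) * Derive v t))
    by (field; lra).
  rewrite <- Hrel. field. lra.
Qed.

Lemma stationary_curved_u_const k : stationary alpha a b u v ->
  (forall t, inI a b t -> curvature u v t = k) -> k <> 0 ->
  forall t, inI a b t -> Derive u t = 0.
Proof.
  intros Hst Hk Hk0. destruct (inI_nonempty a b Hab) as [t0 Ht0].
  assert (Hweight : forall t, inI a b t ->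
    Rpower (u t) alpha * u t * sinh (u t) = alpha * momentum_v alpha u v t0 / k).
  { intros t Ht. rewrite (stationary_momentum_v_const Hst t0 t Ht0 Ht),
      <- (stationary_weight_eq k t Hst Hk Ht).
    field. exact Hk0. }
  apply (Derive_eq0_of_simple_zeros a b (fun x => (alpha + 1) * sinh x + x * cosh x)
           (fun x => (alpha + 2) * cosh x + x * sinh x)); [| exact Hu | |].
  - intros x. unfold sinh, cosh. auto_derive; [easy|]. field.
  - intros t Ht. apply sinh_cosh_simple_zero, Hpos, Ht.
  - intros t Ht. destruct (Hu t Ht) as [Hu1 _]. pose proof (Hpos t Ht) as Hut.
    assert (Hd : is_derive (fun s => Rpower (u s) alpha * u s * sinh (u s)) t
      (Rpower (u t) alpha * (((alpha + 1) * sinh (u t) + u t * cosh (u t)) * Derive u t))).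
    { unfold Rpower, sinh, cosh. auto_derive; [repeat split; assumption|].
      fold_eta_Derive. rewrite exp_Ropp. pose proof (exp_pos (u t)). field. lra. }
    assert (H0 : Rpower (u t) alpha
                 * (((alpha + 1) * sinh (u t) + u t * cosh (u t)) * Derive u t) = 0).
    { rewrite <- (is_derive_unique _ _ _ Hd).
      exact (Derive_locally_const _ _ t (filter_imp _ _ Hweight (inI_locally a b t Ht))). }
    apply (Rmult_eq_reg_l (Rpower (u t) alpha)); [rewrite H0; ring|].
    apply Rgt_not_eq, exp_pos.
Qed.

Lemma in_geodesic_through_N_iff :
  contained_in_geodesic_through_N a b u v <-> forall t, inI a b t -> Derive v t = 0.
Proof.
  split.
  - intros ([[p1 p2] p3] & Hc0 & [_ HN] & Hgeo) t Ht.
    unfold Npole, Defs.c1, Defs.c2, Defs.c3 in HN. cbn [fst snd] in HN.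
    assert (Hp3 : p3 = 0) by lra. subst p3.
    assert (Hplane : forall s, inI a b s -> p1 * cos (v s) + p2 * sin (v s) = 0).
    { intros s Hs. destruct (Hgeo s Hs) as [_ Hl].
      unfold gamma, Psi, Defs.c1, Defs.c2, Defs.c3 in Hl. cbn [fst snd] in Hl.
      pose proof (sinh_pos _ (Hpos s Hs)).
      apply (Rmult_eq_reg_l (sinh (u s))); [rewrite Rmult_0_r, <- Hl; ring|lra]. }
    destruct (Hv t Ht) as [Hv1 _].
    assert (Hd : is_derive (fun s => p1 * cos (v s) + p2 * sin (v s)) t
                   ((- p1 * sin (v t) + p2 * cos (v t)) * Derive v t))
      by (auto_derive; [tauto|fold_eta_Derive; ring]).
    assert (H0 : (- p1 * sin (v t) + p2 * cos (v t)) * Derive v t = 0).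
    { rewrite <- (is_derive_unique _ _ _ Hd).
      exact (Derive_locally_const _ _ t (filter_imp _ _ Hplane (inI_locally a b t Ht))). }
    destruct (Rmult_integral _ _ H0) as [Hperp|]; [exfalso|assumption].
    apply Hc0. pose proof (Hplane t Ht) as Hpar. pose proof (cos2_add_sin2 (v t)) as Hcs.
    assert (Hp1 : p1 = cos (v t) * (p1 * cos (v t) + p2 * sin (v t))
                       - sin (v t) * (- p1 * sin (v t) + p2 * cos (v t)))
      by (rewrite <- (Rmult_1_r p1) at 1; rewrite <- Hcs; ring).
    assert (Hp2 : p2 = sin (v t) * (p1 * cos (v t) + p2 * sin (v t))
                       + cos (v t) * (- p1 * sin (v t) + p2 * cos (v t)))
      by (rewrite <- (Rmult_1_r p2) at 1; rewrite <- Hcs; ring).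
    rewrite Hpar, Hperp in Hp1, Hp2. apply vec3_eq; lra.
  - intros Hv0. destruct (inI_nonempty a b Hab) as [t0 Ht0].
    assert (Hvc : forall t, inI a b t -> v t = v t0)
      by (intros t Ht; apply (eq_on_inI_of_Derive_eq0 a b v); try assumption; apply Hv).
    exists (- sin (v t0), cos (v t0), 0). split; [|split].
    + intros Hc. injection Hc as Hsin Hcos. pose proof (cos2_add_sin2 (v t0)) as Hcs.
      rewrite Hcos in Hcs. assert (sin (v t0) = 0) as Hs0 by lra. rewrite Hs0 in Hcs. lra.
    + unfold geodesic, H2, Npole, Defs.c1, Defs.c2, Defs.c3. cbn [fst snd].
      split; [split; [ring|lra]|ring].
    + intros t Ht. split; [apply H2_Psi|].
      unfold gamma, Psi, Defs.c1, Defs.c2, Defs.c3. cbn [fst snd]. rewrite (Hvc t Ht). ring.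
Qed.

Lemma in_circleN_iff r : 0 < r ->
  contained_in_circleN r a b u v <-> forall t, inI a b t -> u t = r.
Proof.
  intros Hr. split.
  - intros Hc t Ht. destruct (Hc t Ht) as [w Hw]. unfold gamma, Psi in Hw.
    injection Hw as _ _ Hch. exact (cosh_inj_pos _ _ (Hpos t Ht) Hr Hch).
  - intros Hur t Ht. exists (v t). unfold gamma. rewrite (Hur t Ht). reflexivity.
Qed.

Lemma stationary_of_v_const :
  (forall t, inI a b t -> Derive v t = 0) -> stationary alpha a b u v.
Proof.
  intros Hv0. apply stationary_iff_curvature. intros t Ht. unfold curvature_numerator.
  rewrite (Hv0 t Ht), (Derive_Derive_eq0_on_inI a b v t Ht Hv0). ring.
Qed.

Lemma u_const_stationary_iff r : (forall t, inI a b t -> u t = r) ->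
  stationary alpha a b u v <-> alpha = - r * coth r.
Proof.
  intros Hr.
  assert (Hu0 : forall t, inI a b t -> Derive u t = 0)
    by (intros t Ht; exact (Derive_locally_const _ _ t (filter_imp _ _ Hr (inI_locally a b t Ht)))).
  assert (Hat : forall t, inI a b t ->
    curvature_numerator u v t * u t = alpha * sinh (u t) * Derive v t * speed2 u v t
    <-> alpha = - r * coth r).
  { intros t Ht. pose proof (Hspeed t Ht) as Hs. pose proof (Hpos t Ht) as Hut.
    unfold curvature_numerator, speed2 in *.
    rewrite (Hu0 t Ht), (Derive_Derive_eq0_on_inI a b u t Ht Hu0), (Hr t Ht) in *.
    pose proof (sinh_pos r Hut) as Hsh.
    assert (Hv0 : Derive v t <> 0) by (intros Hv0; rewrite Hv0 in Hs; lra).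
    unfold coth. split.
    - intros H. apply (Rmult_eq_reg_r (sinh r ^ 3 * Derive v t ^ 3)).
      + transitivity (alpha * sinh r * Derive v t * (0 ^ 2 + sinh r ^ 2 * Derive v t ^ 2));
          [ring|rewrite <- H; field; lra].
      + apply Rmult_integral_contrapositive_currified; apply pow_nonzero; lra.
    - intros ->. field. lra. }
  rewrite stationary_iff_curvature. split.
  - intros H. destruct (inI_nonempty a b Hab) as [t0 Ht0]. apply (Hat t0 Ht0), H, Ht0.
  - intros H t Ht. apply (Hat t Ht), H.
Qed.

End StationaryCurves.

Theorem theorem2p5 (alpha : R) (a b : Rbar) (u v : R -> R) :
  alpha <> 0 ->
  Rbar_lt a b ->
  smooth_on a b u -> smooth_on a b v ->
  (forall t, inI a b t -> 0 < u t) ->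
  regular_on a b u v ->
  constant_curvature_on a b u v ->
  (stationary alpha a b u v <->
     contained_in_geodesic_through_N a b u v \/
     exists r, 0 < r /\ contained_in_circleN r a b u v /\ alpha = - r * coth r).
Proof.
  intros Hal Hab Hsu Hsv Hpos Hreg [k Hk].
  assert (Hu : forall t, inI a b t -> ex_derive u t /\ ex_derive (Derive u) t)
    by (intros t Ht; exact (conj (Hsu 0%nat t Ht) (Hsu 1%nat t Ht))).
  assert (Hv : forall t, inI a b t -> ex_derive v t /\ ex_derive (Derive v) t)
    by (intros t Ht; exact (conj (Hsv 0%nat t Ht) (Hsv 1%nat t Ht))).
  assert (Hspeed : forall t, inI a b t -> 0 < speed2 u v t)
    by (intros t Ht; apply speed2_pos; [apply Hu|apply Hv|apply Hpos|apply Hreg]; exact Ht).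
  split.
  - intros Hst. destruct (Req_dec k 0) as [->|Hk0].
    + left. apply (in_geodesic_through_N_iff a b u v Hab Hv Hpos).
      exact (stationary_flat_v_const alpha a b u v Hu Hv Hpos Hspeed Hal Hst Hk).
    + right. destruct (inI_nonempty a b Hab) as [t0 Ht0].
      assert (Hr : forall t, inI a b t -> u t = u t0).
      { intros t Ht. apply (eq_on_inI_of_Derive_eq0 a b u); [apply Hu| |exact Ht|exact Ht0].
        exact (stationary_curved_u_const alpha a b u v Hab Hu Hv Hpos Hspeed k Hst Hk Hk0). }
      exists (u t0). split; [exact (Hpos t0 Ht0)|split].
      * exact (proj2 (in_circleN_iff a b u v Hpos (u t0) (Hpos t0 Ht0)) Hr).
      * apply (u_const_stationary_iff alpha a b u v Hab Hu Hv Hpos Hspeed (u t0) Hr), Hst.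
  - intros [Hgeo|(r & Hr & Hcirc & Halpha)].
    + apply (stationary_of_v_const alpha a b u v Hu Hv Hpos Hspeed).
      apply (in_geodesic_through_N_iff a b u v Hab Hv Hpos), Hgeo.
    + apply (u_const_stationary_iff alpha a b u v Hab Hu Hv Hpos Hspeed r); [|exact Halpha].
      apply (in_circleN_iff a b u v Hpos r Hr), Hcirc.
Qed.
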